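(* Let $N\ge 1$ be an integer, let $\alpha$ be a real number with $1/N\le\alpha\le 1$, and let $P>0$. Define $$\mathcal{D}_1=\{\mathbf{x}\in\mathbb{C}^N : \|\mathbf{x}\|_2^2\le P\},\qquad \mathcal{D}_2=\{\mathbf{x}\in\mathbb{C}^N : |x_i|^2\le \alpha\|\mathbf{x}\|_2^2 \text{ for all } i=1,\dots,N\},$$ and $\mathcal{D}=\mathcal{D}_1\cap\mathcal{D}_2$. Let $\mathbf{z}\in\mathbb{C}^N$ and let $\mathbf{x}'$ be an orthogonal projection of $\mathbf{z}$ onto $\mathcal{D}_2$, i.e., $\mathbf{x}'\in\mathcal{D}_2$ and $\|\mathbf{z}-\mathbf{x}'\|_2\le\|\mathbf{z}-\mathbf{w}\|_2$ for all $\mathbf{w}\in\mathcal{D}_2$. Set $\mathbf{x}=\mathbf{x}'$ if $\mathbf{x}'=\mathbf{0}$, and otherwise $\mathbf{x}=\min\{1,\sqrt{P}/\|\mathbf{x}'\|_2\}\,\mathbf{x}'$ (the orthogonal projection of $\mathbf{x}'$ onto $\mathcal{D}_1$). Then $\mathbf{x}$ is an orthogonal projection of $\mathbf{z}$ onto $\mathcal{D}$, i.e., $\mathbf{x}\in\mathcal{D}$ and $\|\mathbf{z}-\mathbf{x}\|_2\le\|\mathbf{z}-\mathbf{w}\|_2$ for all $\mathbf{w}\in\mathcal{D}$.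
   Context: $\|\cdot\|_2$ is the Euclidean norm on $\mathbb{C}^N$. The set $\mathcal{D}_2$ is the set of vectors whose peak-to-average power ratio $N\|\mathbf{x}\|_\infty^2/\|\mathbf{x}\|_2^2$ is at most $\rho=\alpha N$ (together with $\mathbf{0}$), and $\mathcal{D}_1$ is a power (norm) constraint. *)

(* reals = an arbitrary real closed field R (e.g. the real
   numbers), complex numbers = R[i] from mathcomp-real-closed. *)
From HB Require Import structures.
From mathcomp Require Import all_boot all_order all_algebra.
From mathcomp Require Import complex.
Set Implicit Arguments. Unset Strict Implicit. Unset Printing Implicit Defensive.
Import Order.TTheory GRing.Theory Num.Theory.
Local Open Scope ring_scope.
Local Open Scope complex_scope.

Definition cabs2 (R : rcfType) (c : R[i]) : R :=
  let: a +i* b := c in a ^+ 2 + b ^+ 2.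

Definition cvec (R : rcfType) (N : nat) := {ffun 'I_N -> R[i]}.

Definition sqnorm2 (R : rcfType) (N : nat) (x : cvec R N) : R :=
  \sum_(i < N) cabs2 (x i).
Definition norm2 (R : rcfType) (N : nat) (x : cvec R N) : R :=
  Num.sqrt (sqnorm2 x).

Definition vsub (R : rcfType) (N : nat) (x y : cvec R N) : cvec R N :=
  [ffun i => x i - y i].
Definition vscale (R : rcfType) (N : nat) (a : R) (x : cvec R N) : cvec R N :=
  [ffun i => a%:C * x i].
Definition vzero (R : rcfType) (N : nat) : cvec R N := [ffun=> 0].

Definition D1 (R : rcfType) (N : nat) (P : R) (x : cvec R N) : Prop :=
  sqnorm2 x <= P.
Definition D2 (R : rcfType) (N : nat) (alpha : R) (x : cvec R N) : Prop :=
  forall i : 'I_N, cabs2 (x i) <= alpha * sqnorm2 x.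
Definition Dset (R : rcfType) (N : nat) (P alpha : R) (x : cvec R N) : Prop :=
  D1 P x /\ D2 alpha x.

Definition is_proj (R : rcfType) (N : nat) (S : cvec R N -> Prop)
  (z x : cvec R N) : Prop :=
  S x /\ forall w, S w -> norm2 (vsub z x) <= norm2 (vsub z w).

From HB Require Import structures.
From mathcomp Require Import all_boot all_order all_algebra.
From mathcomp Require Import complex.
From mathcomp Require Import ring lra.
Set Implicit Arguments. Unset Strict Implicit. Unset Printing Implicit Defensive.
Import Order.TTheory GRing.Theory Num.Theory.
Local Open Scope ring_scope.

(* The PAPR set D2 is a cone: it is closed under scaling by nonnegative reals
   (but it is not convex).  Comparing the projection x' of z onto a cone with
   the scalings of x' gives <z, x'> = ||x'||^2, and comparing it with the
   scalings of any w in the cone gives <z, w> <= ||x'|| ||w||.  Hence for w of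
   norm r <= sqrt P in the cone,
     ||z - w||^2 - ||z||^2 >= (r - ||x'||)^2 - ||x'||^2,
   and the right-hand side is smallest at r = min(||x'||, sqrt P), which is
   exactly the norm of the rescaled point x, where equality holds. *)

Section RealQuadratics.
Variable R : rcfType.

Lemma quadratic_min_at1 (p q : R) : 0 <= q ->
  (forall c, 0 <= c -> q - 2 * p <= c ^+ 2 * q - 2 * c * p) -> p = q.
Proof.
move=> q_ge0 min1.
have min1_0 := min1 0 (lexx _); have min1_2 := min1 2 (ler0n _ 2).
rewrite expr2 !(mulr0, mul0r) subr0 in min1_0.
have [q0|q_neq0] := eqVneq q 0; first by rewrite q0 in min1_0 min1_2 *; lra.
have q_gt0 : 0 < q by rewrite lt_def q_neq0.
have p_ge0 : 0 <= p by lra.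
have := min1 (p / q) (divr_ge0 p_ge0 q_ge0).
have : p / q * q = p by rewrite divfK.
move: (p / q) => c cq_p minc.
have : (p - q) ^+ 2 <= 0 by nra.
by rewrite exprn_even_le0 //= subr_eq0 => /eqP.
Qed.

Lemma le_sqrtM_of_quadratic_ge0 (b q rho : R) : 0 <= q -> 0 <= rho ->
  (forall c, 0 <= c -> 2 * c * b <= q + c ^+ 2 * rho) ->
  b <= Num.sqrt q * Num.sqrt rho.
Proof.
move=> q_ge0 rho_ge0 quad_ge0.
have [b_le0|b_gt0] := leP b 0.
  by apply: le_trans b_le0 _; rewrite mulr_ge0 ?sqrtr_ge0.
suff bb_le : b ^+ 2 <= q * rho.
  by rewrite -sqrtrM // -(gtr0_norm b_gt0) -sqrtr_sqr ler_sqrt ?mulr_ge0.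
have [rho0|rho_gt0] := eqVneq rho 0.
  (* then the right-hand side does not grow with c, while the left does *)
  have := quad_ge0 ((q + 1) / b) (divr_ge0 (addr_ge0 q_ge0 ler01) (ltW b_gt0)).
  by rewrite rho0 mulr0 addr0 -mulrA divfK ?gt_eqF //; lra.
have {}rho_gt0 : 0 < rho by rewrite lt_def rho_gt0.
have := quad_ge0 (b / rho) (divr_ge0 (ltW b_gt0) (ltW rho_gt0)).
have : b / rho * rho = b by rewrite divfK ?gt_eqF.
move: (b / rho) => c crho_b; nra.
Qed.

Lemma min1_div_mul (a s : R) : 0 <= a -> 0 <= s ->
  Num.min 1 (s / a) * a = Num.min a s.
Proof.
move=> a_ge0 s_ge0; have [->|a_neq0] := eqVneq a 0.
  by rewrite mulr0 (min_idPl s_ge0).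
by rewrite minr_pMl // mul1r divfK.
Qed.

Lemma sqr_min_sub_le (a s r : R) : r <= s ->
  (Num.min a s - a) ^+ 2 <= (r - a) ^+ 2.
Proof.
move=> r_le_s; have [_|s_lt_a] := leP a s; last by nra.
by rewrite subrr expr0n sqr_ge0.
Qed.

End RealQuadratics.

Section ComplexVectors.
Local Open Scope complex_scope.
Variables (R : rcfType) (N : nat).

Definition cdot (u v : R[i]) : R :=
  let: a +i* b := u in let: a' +i* b' := v in a * a' + b * b'.

Definition vdot (x y : cvec R N) : R := \sum_(i < N) cdot (x i) (y i).

Lemma cabs2_ge0 (u : R[i]) : 0 <= cabs2 u.
Proof. by case: u => a b; rewrite /cabs2 addr_ge0 ?sqr_ge0. Qed.

Lemma cabs2_scale (c : R) (u : R[i]) : cabs2 (c%:C * u) = c ^+ 2 * cabs2 u.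
Proof. by case: u => a b; rewrite /cabs2 /=; ring. Qed.

Lemma cabs2_sub (u v : R[i]) : cabs2 (u - v) = cabs2 u - 2 * cdot u v + cabs2 v.
Proof. by case: u => a b; case: v => a' b'; rewrite /cabs2 /cdot /=; ring. Qed.

Lemma cdot_scaler (c : R) (u v : R[i]) : cdot u (c%:C * v) = c * cdot u v.
Proof. by case: u => a b; case: v => a' b'; rewrite /cdot /=; ring. Qed.

Lemma sqnorm2_ge0 (x : cvec R N) : 0 <= sqnorm2 x.
Proof. by apply: sumr_ge0 => i _; apply: cabs2_ge0. Qed.

Lemma sqr_norm2 (x : cvec R N) : norm2 x ^+ 2 = sqnorm2 x.
Proof. by rewrite sqr_sqrtr // sqnorm2_ge0. Qed.

Lemma ler_norm2 (x y : cvec R N) :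
  (norm2 x <= norm2 y) = (sqnorm2 x <= sqnorm2 y).
Proof. by rewrite ler_sqrt // sqnorm2_ge0. Qed.

Lemma sqnorm2_scale (c : R) (x : cvec R N) :
  sqnorm2 (vscale c x) = c ^+ 2 * sqnorm2 x.
Proof.
by rewrite /sqnorm2 mulr_sumr; apply: eq_bigr => i _; rewrite ffunE cabs2_scale.
Qed.

Lemma vdot_scaler (c : R) (x y : cvec R N) :
  vdot x (vscale c y) = c * vdot x y.
Proof.
by rewrite /vdot mulr_sumr; apply: eq_bigr => i _; rewrite ffunE cdot_scaler.
Qed.

Lemma sqnorm2_sub (x y : cvec R N) :
  sqnorm2 (vsub x y) = sqnorm2 x - 2 * vdot x y + sqnorm2 y.
Proof.
rewrite /sqnorm2 /vdot mulr_sumr -sumrN -!big_split /=.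
by apply: eq_bigr => i _; rewrite ffunE cabs2_sub.
Qed.

Lemma vscale0 (c : R) : vscale c (vzero R N) = vzero R N.
Proof. by apply/ffunP => i; rewrite !ffunE mulr0. Qed.

Definition cone (S : cvec R N -> Prop) : Prop :=
  forall (c : R) x, 0 <= c -> S x -> S (vscale c x).

Lemma D2_cone (alpha : R) : cone (D2 alpha).
Proof.
move=> c x c_ge0 x_D2 i; rewrite sqnorm2_scale ffunE cabs2_scale.
by rewrite mulrCA ler_wpM2l ?sqr_ge0.
Qed.

End ComplexVectors.

Section ProjectionOntoCone.
Variables (R : rcfType) (N : nat) (S : cvec R N -> Prop) (z x : cvec R N).
Hypotheses (S_cone : cone S) (x_proj : is_proj S z x).

Lemma proj_cone_le_scale (c : R) (w : cvec R N) : 0 <= c -> S w ->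
  sqnorm2 z - 2 * vdot z x + sqnorm2 x
    <= sqnorm2 z - 2 * c * vdot z w + c ^+ 2 * sqnorm2 w.
Proof.
move=> c_ge0 Sw; have := x_proj.2 _ (S_cone c_ge0 Sw).
by rewrite ler_norm2 !sqnorm2_sub vdot_scaler sqnorm2_scale mulrA.
Qed.

Lemma proj_cone_vdot : vdot z x = sqnorm2 x.
Proof.
apply: quadratic_min_at1 (sqnorm2_ge0 x) _ => c c_ge0.
by have := proj_cone_le_scale c_ge0 x_proj.1; lra.
Qed.

Lemma proj_cone_vdot_le (w : cvec R N) : S w -> vdot z w <= norm2 x * norm2 w.
Proof.
move=> Sw; apply: le_sqrtM_of_quadratic_ge0 (sqnorm2_ge0 _) (sqnorm2_ge0 _) _.
by move=> c c_ge0; have := proj_cone_le_scale c_ge0 Sw; rewrite proj_cone_vdot; lra.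
Qed.

Lemma proj_cone_ball (P : R) : 0 <= P ->
  is_proj (fun w => D1 P w /\ S w) z
    (vscale (Num.min 1 (Num.sqrt P / norm2 x)) x).
Proof.
move=> P_ge0; set a := norm2 x; set s := Num.sqrt P.
set t := Num.min 1 (s / a).
have a_ge0 : 0 <= a := sqrtr_ge0 _.
have s_ge0 : 0 <= s := sqrtr_ge0 _.
have ta : t * a = Num.min a s := min1_div_mul a_ge0 s_ge0.
have t_ge0 : 0 <= t by rewrite le_min ler01 divr_ge0.
have sqnorm2_tx : sqnorm2 (vscale t x) = Num.min a s ^+ 2.
  by rewrite sqnorm2_scale -sqr_norm2 -exprMn ta.
split.
  split; last exact: S_cone t_ge0 x_proj.1.
  rewrite /D1 sqnorm2_tx -(sqr_sqrtr P_ge0) -/s.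
  by rewrite ler_sqr ?nnegrE ?le_min ?a_ge0 // ge_min lexx orbT.
move=> w [w_D1 Sw].
have r_le_s : norm2 w <= s by rewrite ler_sqrt.
have := sqr_min_sub_le a r_le_s.
have := proj_cone_vdot_le Sw.
rewrite ler_norm2 !sqnorm2_sub vdot_scaler proj_cone_vdot sqnorm2_scale.
rewrite -(sqr_norm2 x) -(sqr_norm2 w) -/a -ta.
nra.
Qed.

End ProjectionOntoCone.

Theorem mainTheorem1 (R : rcfType) (N : nat) (alpha P : R)
  (z x' : cvec R N) :
  (1 <= N)%N ->
  N%:R^-1 <= alpha -> alpha <= 1 -> 0 < P ->
  is_proj (D2 alpha) z x' ->
  is_proj (Dset P alpha) z
    (if x' == vzero R N then x'
     else vscale (Num.min 1 (Num.sqrt P / norm2 x')) x').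
Proof.
(* The bounds on N and alpha only make D2 nontrivial; the argument works for
   any cone. *)
move=> _ _ _ P_gt0 x'_proj.
have -> : (if x' == vzero R N then x'
           else vscale (Num.min 1 (Num.sqrt P / norm2 x')) x')
          = vscale (Num.min 1 (Num.sqrt P / norm2 x')) x'.
  by case: eqP => // ->; rewrite vscale0.
exact (proj_cone_ball (@D2_cone R N alpha) x'_proj (ltW P_gt0)).
Qed.
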